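(* Let $(X,d,m)$ be a metric measure space and let $p\ge1$. Let $A\subseteq X$ be such that $m(A)=0$. Then $\mathrm{AM}_p(A,m)\le m^{+,p}(A)$.
   Context: Metric measure space: complete separable metric space with nonnegative Borel measure finite on bounded sets. Minkowski content: $m^{+,p}(A)=\liminf_{r\to0}m(\overline B_r(A)\setminus A)/r^p$ with $\overline B_r(A)=\{z:d(z,A)\le r\}$. Approximate modulus: $\mathrm{AM}_p(A,m)=\inf\liminf_j\int\rho_j^pdm$, infimum over sequences of Borel $\rho_j:X\to[0,\infty]$ with $\liminf_j\int_\gamma\rho_j\,ds\ge1$ for every continuous curve $\gamma:[0,1]\to X$ whose image meets $A$. *)

From HB Require Import structures.
From mathcomp Require Import all_boot all_order all_algebra.
From mathcomp Require Import all_classical all_reals all_analysis.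
From mathcomp Require Import measurable_realfun.
Set Implicit Arguments. Unset Strict Implicit. Unset Printing Implicit Defensive.
Import Order.TTheory GRing.Theory Num.Theory.
Local Open Scope classical_set_scope.
Local Open Scope ring_scope.

Section MMS.
Context {R : realType} {X : Type}.
Variable d : X -> X -> R.

Definition is_metric : Prop :=
  (forall x y, d x y = 0 <-> x = y) /\ (forall x y, d x y = d y x) /\
  (forall x y z, d x z <= d x y + d y z).

Definition metric_complete : Prop :=
  forall u : nat -> X,
    (forall e, 0 < e -> exists N, forall n k, (N <= n)%N -> (N <= k)%N -> d (u n) (u k) < e) ->
    exists x, forall e, 0 < e -> exists N, forall n, (N <= n)%N -> d (u n) x < e.

Definition metric_separable : Prop :=
  exists D : set X, countable D /\
    forall x e, 0 < e -> exists2 y, D y & d x y < e.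

Definition dopen (U : set X) : Prop :=
  forall x, U x -> exists2 e, 0 < e & forall y, d x y < e -> U y.

(** distance from a point to a set (+oo for the empty set) *)
Definition dist_set (A : set X) (z : X) : \bar R :=
  ereal_inf [set (d z a)%:E | a in A].

Definition cl_nbhd (A : set X) (r : R) : set X :=
  [set z | (dist_set A z <= r%:E)%E].

(** curves gamma : [0,1] -> X (given as functions on R; only the values on [0,1] matter) *)
Definition curve_continuous (g : R -> X) : Prop :=
  forall t, 0 <= t <= 1 -> forall e, 0 < e -> exists2 del, 0 < del &
    forall s, 0 <= s <= 1 -> `|s - t| < del -> d (g s) (g t) < e.

Definition curve_length (g : R -> X) (a b : R) : \bar R :=
  ereal_sup [set x | exists (n : nat) (t : nat -> R),
    t 0%N = a /\ t n = b /\ (forall i, (i < n)%N -> t i <= t i.+1) /\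
    x = (\sum_(i < n) d (g (t i)) (g (t i.+1)))%:E].

Definition rectifiable (g : R -> X) : Prop := (curve_length g 0 1 < +oo)%E.

(** arc-length parametrisation: gt(s) = g(u) for some u in [0,1] with
    length of g|[0,u] = s (well defined, independent of the choice of u) *)
Definition arclength_param (g : R -> X) (s : R) : X :=
  g (xget (0 : R) [set u : R | 0 <= u <= 1 /\ curve_length g 0 u = s%:E]).

End MMS.

Section LineInt.
Context {R : realType} {X : Type}.
Variable d : X -> X -> R.

Definition line_integral (g : R -> X) (rho : X -> \bar R) : \bar R :=
  (\int[@lebesgue_measure R]_(s in [set s : R | (0 <= s <= fine (curve_length d g 0 1))%R])
      rho (arclength_param d g s))%E.

Definition liminf0 (f : R -> \bar R) : \bar R :=
  ereal_sup [set ereal_inf [set f r | r in [set r | 0 < r < del]] | del in [set del : R | 0 < del]].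
End LineInt.

Section AM.
Context {R : realType} {dX : measure_display} {X : measurableType dX}.
Variables (d : X -> X -> R) (mu : {measure set X -> \bar R}) (p : R).
Local Open Scope ereal_scope.

Definition minkowski_content (A : set X) : \bar R :=
  liminf0 (fun r => mu (cl_nbhd d A r `\` A) * ((r `^ p)^-1)%:E).

Definition test_curve (A : set X) (g : R -> X) : Prop :=
  [/\ curve_continuous d g, rectifiable d g,
      (exists s t, (0 <= s <= 1)%R /\ (0 <= t <= 1)%R /\ g s <> g t) &
      exists t, (0 <= t <= 1)%R /\ A (g t)].

Definition AM_admissible (A : set X) (rho : nat -> X -> \bar R) : Prop :=
  (forall j, measurable_fun [set: X] (rho j : X -> \bar R)) /\
  (forall j x, 0 <= rho j x) /\
  (forall g, test_curve A g -> 1 <= limn_einf (fun j => line_integral d g (rho j))).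

Definition AM (A : set X) : \bar R :=
  ereal_inf [set limn_einf (fun j => \int[mu]_x (poweR (rho j x) p)) |
             rho in [set rho | AM_admissible A rho]].
End AM.

(* Choose radii r_j -> 0 along which m(N_r(A) \ A) / r^p approaches the
   Minkowski content, N_r(A) being the closed r-neighbourhood of A, and test
   AM_p with rho_j = r_j^-1 1_{N_{r_j}(A)}.  As m(A) = 0, the p-energy of rho_j
   is exactly m(N_{r_j}(A) \ A) / r_j^p.  A nonconstant rectifiable curve
   meeting A at gamma(t0) has length L > 0, and once r_j <= L an arc-length
   window of size r_j around the arc-length position of gamma(t0) is mapped
   into the closed r_j-ball about gamma(t0), hence into N_{r_j}(A); so the line
   integral of rho_j is at least 1.  Continuity of gamma enters through the
   continuity of s |-> length(gamma|[0,s]), which makes the arc-length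
   parametrisation defined on all of [0, L]. *)

From HB Require Import structures.
From mathcomp Require Import all_boot all_order all_algebra.
From mathcomp Require Import all_classical all_reals all_analysis.
From mathcomp Require Import measurable_realfun.
From mathcomp Require Import lra ring zify.
Import Order.TTheory GRing.Theory Num.Theory numFieldNormedType.Exports HBNNSimple.
Local Open Scope classical_set_scope.
Local Open Scope ring_scope.
Set Implicit Arguments. Unset Strict Implicit. Unset Printing Implicit Defensive.

Section Metric.
Context {R : realType} {X : Type} (d : X -> X -> R).
Hypothesis dm : is_metric d.

Lemma is_metric_eq0 x y : d x y = 0 <-> x = y.
Proof. by case: dm. Qed.

Lemma is_metric_xx x : d x x = 0.
Proof. exact/is_metric_eq0. Qed.

Lemma is_metric_sym x y : d x y = d y x.
Proof. by case: dm => _ []. Qed.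

Lemma is_metric_triangle x y z : d x z <= d x y + d y z.
Proof. by case: dm => _ []. Qed.

Lemma is_metric_ge0 x y : 0 <= d x y.
Proof.
by have := is_metric_triangle x y x; rewrite is_metric_xx (is_metric_sym y x); lra.
Qed.

Lemma is_metric_gt0 x y : x <> y -> 0 < d x y.
Proof.
by move=> xy; rewrite lt_neqAle is_metric_ge0 andbT eq_sym; apply/eqP => /is_metric_eq0.
Qed.

End Metric.

Section Partition.
Context {R : realType}.

Definition is_partition a b n (t : nat -> R) :=
  [/\ t 0%N = a, t n = b & forall i, (i < n)%N -> t i <= t i.+1].

Definition two_point_partition a b : nat -> R := fun i => if i is 0%N then a else b.

Lemma is_partition_two_point a b :
  a <= b -> is_partition a b 1 (two_point_partition a b).
Proof. by move=> ab; split=> // -[]. Qed.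

Definition cat_partition n (t s : nat -> R) : nat -> R :=
  fun i => if (i <= n)%N then t i else s (i - n)%N.

Lemma is_partition_cat a b c n m t s : is_partition a b n t ->
  is_partition b c m s -> is_partition a c (n + m) (cat_partition n t s).
Proof.
move=> [t0 tn tle] [s0 sm sle]; split.
- by rewrite /cat_partition leq0n.
- rewrite /cat_partition addKn; case: leqP => // nm_le_n.
  have m0 : m = 0%N by lia.
  by move: sm; rewrite m0 addn0 tn s0.
- move=> i i_lt; rewrite /cat_partition.
  have [i_lt_n|n_le_i] := ltnP i n; first by rewrite ltnW // tle.
  have [->|i_neq_n] := eqVneq i n.
    by rewrite leqnn subSnn tn -s0 sle //; lia.
  rewrite (_ : (i <= n)%N = false); last by lia.
  by rewrite subSn // sle //; lia.
Qed.

Lemma is_partition_clip_min a b c n t : a <= b -> b <= c ->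
  is_partition a c n t -> is_partition a b n (fun i => Order.min (t i) b).
Proof.
move=> ab bc [t0 tn tle]; split=> [||i /tle ti]; last exact: le_min2.
- by rewrite t0 min_l.
- by rewrite tn min_r.
Qed.

Lemma is_partition_clip_max a b c n t : a <= b -> b <= c ->
  is_partition a c n t -> is_partition b c n (fun i => Order.max (t i) b).
Proof.
move=> ab bc [t0 tn tle]; split=> [||i /tle ti]; last exact: le_max2.
- by rewrite t0 max_r.
- by rewrite tn max_l.
Qed.

End Partition.

Section CurveLength.
Context {R : realType} {X : Type} (d : X -> X -> R) (g : R -> X).
Hypothesis dm : is_metric d.
Local Notation V := (curve_length d g).

Definition partition_sum n (t : nat -> R) := \sum_(i < n) d (g (t i)) (g (t i.+1)).

Lemma partition_sum_le_curve_length a b n t :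
  is_partition a b n t -> ((partition_sum n t)%:E <= V a b)%E.
Proof. by case=> t0 tn tle; apply: ereal_sup_ubound; exists n, t. Qed.

Lemma curve_length_le a b c :
  (forall n t, is_partition a b n t -> partition_sum n t <= c) -> (V a b <= c%:E)%E.
Proof.
move=> h; apply: ge_ereal_sup => _ [n [t [t0 [tn [tle ->]]]]].
by rewrite lee_fin; apply: h.
Qed.

Lemma partition_sum_two_point a b :
  partition_sum 1 (two_point_partition a b) = d (g a) (g b).
Proof. by rewrite /partition_sum big_ord1. Qed.

Lemma partition_sum_cat n m t s : t n = s 0%N ->
  partition_sum (n + m) (cat_partition n t s) = partition_sum n t + partition_sum m s.
Proof.
move=> tns; rewrite /partition_sum big_split_ord /=; congr (_ + _).
  by apply: eq_bigr => i _; rewrite /cat_partition ltnW // ltn_ord.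
apply: eq_bigr => i _; rewrite /cat_partition.
rewrite (_ : (n + i < n)%N = false); last by lia.
rewrite -addnS !addKn; case: ifP => // i0.
have -> : nat_of_ord i = 0%N by lia.
by rewrite addn0 tns.
Qed.

Lemma dist_le_curve_length a b : a <= b -> ((d (g a) (g b))%:E <= V a b)%E.
Proof.
move=> ab; rewrite -partition_sum_two_point.
exact/partition_sum_le_curve_length/is_partition_two_point.
Qed.

Lemma curve_length_ge0 a b : a <= b -> (0 <= V a b)%E.
Proof.
by move=> ab; apply: le_trans (dist_le_curve_length ab); rewrite lee_fin is_metric_ge0.
Qed.

Lemma curve_length_superadditive a b c :
  a <= b -> b <= c -> (V a b + V b c <= V a c)%E.
Proof.
move=> ab bc.
case Eac: (V a c) (curve_length_ge0 (le_trans ab bc)) => [C| |] // _; last first.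
  by rewrite leey.
have sum_le n t m s : is_partition a b n t -> is_partition b c m s ->
    partition_sum n t + partition_sum m s <= C.
  move=> P Q; rewrite -lee_fin -Eac -partition_sum_cat.
    exact/partition_sum_le_curve_length/(is_partition_cat P Q).
  by case: P => _ -> _; case: Q.
(* bounding V a b by a real number makes it finite, so it can be subtracted *)
have Vab_le : (V a b <= (C - d (g b) (g c))%:E)%E.
  apply: curve_length_le => n t P; rewrite lerBrDr -partition_sum_two_point.
  exact: sum_le P (is_partition_two_point bc).
have Vab_fin : V a b \is a fin_num.
  by rewrite ge0_fin_numE ?curve_length_ge0 // (le_lt_trans Vab_le) ?ltry.
rewrite -(fineK Vab_fin) -leeBrDl // -EFinB; apply: curve_length_le => m s Q.
rewrite lerBrDl -lerBrDr -lee_fin fineK //; apply: curve_length_le => n t P.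
by rewrite lerBrDr; exact: sum_le P Q.
Qed.

Lemma curve_length_sub a b c e :
  c <= a -> a <= b -> b <= e -> (V a b <= V c e)%E.
Proof.
move=> ca ab be.
apply: le_trans _ (curve_length_superadditive (le_trans ca ab) be).
apply: le_trans _ (leeDl _ (curve_length_ge0 be)).
apply: le_trans _ (curve_length_superadditive ca ab).
exact: leeDr (curve_length_ge0 ca).
Qed.

Lemma dist_le_clip x y b : d (g x) (g y) <=
  d (g (Order.min x b)) (g (Order.min y b)) + d (g (Order.max x b)) (g (Order.max y b)).
Proof.
case: (leP x b) => xb; case: (leP y b) => yb.
- by rewrite is_metric_xx // addr0.
- exact: is_metric_triangle.
- by rewrite addrC is_metric_triangle.
- by rewrite is_metric_xx // add0r.
Qed.

Lemma partition_sum_le_clip n t b :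
  partition_sum n t <= partition_sum n (fun i => Order.min (t i) b) +
                       partition_sum n (fun i => Order.max (t i) b).
Proof.
by rewrite /partition_sum -big_split; apply: ler_sum => i _; exact: dist_le_clip.
Qed.

Lemma partition_sum_le_in_ball n t y eta :
  (forall i, (i <= n)%N -> d (g (t i)) y < eta) ->
  partition_sum n t <= n%:R * (2 * eta).
Proof.
move=> near_y; rewrite mulr_natl -[n in _ *+ n]card_ord -sumr_const /partition_sum.
apply: ler_sum => i _; apply: le_trans (is_metric_triangle dm _ y _) _.
rewrite (is_metric_sym dm y); have := near_y i (ltnW (ltn_ord i)).
by have := near_y i.+1 (ltn_ord i); lra.
Qed.

End CurveLength.

Section ArcLength.
Context {R : realType} {X : Type} (d : X -> X -> R) (g : R -> X).
Hypotheses (dm : is_metric d) (g_rect : rectifiable d g).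
Local Notation V := (curve_length d g).

Definition arclength u := fine (V 0 u).

Lemma curve_length_fin_num a b : 0 <= a -> a <= b -> b <= 1 -> V a b \is a fin_num.
Proof.
move=> a0 ab b1; rewrite ge0_fin_numE ?curve_length_ge0 //.
exact: le_lt_trans (curve_length_sub g dm a0 ab b1) g_rect.
Qed.

Lemma arclengthE u : 0 <= u -> u <= 1 -> V 0 u = (arclength u)%:E.
Proof. by move=> u0 u1; rewrite fineK // curve_length_fin_num. Qed.

Lemma curve_length_le_arclength a b : 0 <= a -> a <= b -> b <= 1 ->
  (V a b <= (arclength b - arclength a)%:E)%E.
Proof.
move=> a0 ab b1; rewrite EFinB leeBrDl // -arclengthE ?(le_trans ab) //.
by rewrite -arclengthE ?(le_trans a0) //; exact: curve_length_superadditive.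
Qed.

Lemma dist_le_arclength a b : 0 <= a -> a <= b -> b <= 1 ->
  d (g a) (g b) <= arclength b - arclength a.
Proof.
move=> a0 ab b1; rewrite -lee_fin.
exact: le_trans (dist_le_curve_length d g ab) (curve_length_le_arclength a0 ab b1).
Qed.

Lemma arclength_le a b : 0 <= a -> a <= b -> b <= 1 -> arclength a <= arclength b.
Proof.
move=> a0 ab b1; have := dist_le_arclength a0 ab b1.
by have := is_metric_ge0 dm (g a) (g b); lra.
Qed.

Lemma arclength0 : arclength 0 = 0.
Proof.
have := curve_length_le_arclength (lexx 0) (lexx 0) ler01; rewrite subrr => V00_le.
have V00 : V 0 0 = 0%E by apply/le_anti; rewrite V00_le curve_length_ge0.
by rewrite /arclength V00.
Qed.

Lemma arclength_ge0 u : 0 <= u -> u <= 1 -> 0 <= arclength u.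
Proof. by move=> u0 u1; rewrite -arclength0 arclength_le. Qed.

Lemma dist_le_arclength_norm u v : 0 <= u <= 1 -> 0 <= v <= 1 ->
  d (g u) (g v) <= `|arclength u - arclength v|.
Proof.
move=> /andP[u0 u1] /andP[v0 v1]; have [uv|/ltW vu] := leP u v.
  by rewrite distrC ger0_norm ?subr_ge0 ?arclength_le // dist_le_arclength.
by rewrite is_metric_sym // ger0_norm ?subr_ge0 ?arclength_le // dist_le_arclength.
Qed.

Lemma arclength1_gt0 s t : 0 <= s <= 1 -> 0 <= t <= 1 -> g s <> g t -> 0 < arclength 1.
Proof.
move=> s01 t01 gst; apply: lt_le_trans (is_metric_gt0 dm gst) _.
apply: le_trans (dist_le_arclength_norm s01 t01) _.
move: s01 t01 => /andP[s0 s1] /andP[t0 t1].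
have := arclength_le s0 s1 (lexx 1); have := arclength_le t0 t1 (lexx 1).
have := arclength_ge0 s0 s1; have := arclength_ge0 t0 t1.
rewrite ler_norml; lra.
Qed.

Hypothesis g_cont : curve_continuous d g.

(* Take a partition whose sum is within e/3 of the length and clip it at a and
   b: the outer pieces are bounded by the lengths over [0,a] and [b,1], and the
   middle piece stays within eta of g u. *)
Lemma arclength_increment_small u e : 0 <= u <= 1 -> 0 < e -> exists2 del, 0 < del &
  forall a b, 0 <= a -> a <= b -> b <= 1 -> `|a - u| < del -> `|b - u| < del ->
  arclength b - arclength a < e.
Proof.
move=> u01 e0.
have : ((arclength 1 - e / 3)%:E < V 0 1)%E by rewrite arclengthE // lte_fin; lra.
move=> /ereal_sup_gt[_ [n [t [t0 [tn [tle ->]]]]]].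
rewrite lte_fin -/(partition_sum d g n t) => t_long.
have P : is_partition 0 1 n t by [].
pose eta := e / 6 / n.+1%:R.
have eta0 : 0 < eta by rewrite divr_gt0 // divr_gt0.
have [del del0 near_u] := g_cont u01 eta0.
exists del => // a b a0 ab b1 au bu.
pose t_hi i := Order.max (t i) a; pose t_mid i := Order.min (t_hi i) b.
have P_hi := is_partition_clip_max a0 (le_trans ab b1) P.
have split_a := partition_sum_le_clip g dm n t a.
have split_b := partition_sum_le_clip g dm n t_hi b.
have := partition_sum_le_curve_length d g (is_partition_clip_min a0 (le_trans ab b1) P).
rewrite arclengthE ?(le_trans ab) // lee_fin => sum_lo.
have := partition_sum_le_curve_length d g (is_partition_clip_max ab b1 P_hi).
move=> /le_trans/(_ (curve_length_le_arclength (le_trans a0 ab) b1 (lexx 1))).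
rewrite lee_fin => sum_hi.
have sum_mid : partition_sum d g n t_mid <= e / 3.
  apply: le_trans (partition_sum_le_in_ball dm (y := g u) (eta := eta) _) _.
    move=> i _; have : a <= t_mid i <= b.
      by rewrite ge_min lexx orbT le_min le_max lexx ab orbT.
    move=> /andP[a_le le_b]; apply: near_u.
      by rewrite (le_trans a0 a_le) (le_trans le_b b1).
    by move: au bu; rewrite !ltr_norml; lra.
  rewrite (_ : _ * _ = e / 3 * (n%:R / n.+1%:R)); last by rewrite /eta; field.
  rewrite ler_piMr ?divr_ge0 ?ltW //.
  by rewrite ltr_pdivrMr ?ltr0n // mul1r ltr_nat.
have := arclength_le (le_trans a0 ab) b1 (lexx 1); lra.
Qed.

Lemma arclength_continuous : {within `[0, 1], continuous arclength}.
Proof.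
apply/subspace_continuousP => u; rewrite /= in_itv /= => u01.
apply/cvgrPdist_lt => e e0.
have [del del0 small] := arclength_increment_small u01 e0.
exists del => //= v /= uv; rewrite in_itv /= => /andP[v0 v1].
rewrite distrC in uv; have uu : `|u - u| < del by rewrite subrr normr0.
move: u01 => /andP[u0 u1]; have [le_uv|/ltW le_vu] := leP u v.
  by rewrite distrC ger0_norm ?subr_ge0 ?arclength_le //; exact: small.
by rewrite ger0_norm ?subr_ge0 ?arclength_le //; exact: small.
Qed.

Lemma arclength_surjective s : 0 <= s <= arclength 1 ->
  exists2 u, 0 <= u <= 1 & arclength u = s.
Proof.
move=> s01; have := IVT ler01 arclength_continuous.
rewrite arclength0 min_l ?max_r ?arclength_ge0 // => /(_ s s01)[u].
by rewrite in_itv /=; exists u.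
Qed.

Lemma arclength_paramP s : 0 <= s <= arclength 1 ->
  exists2 w, 0 <= w <= 1 & arclength_param d g s = g w /\ arclength w = s.
Proof.
move=> s01; have [u /andP[u0 u1] us] := arclength_surjective s01.
set P := [set u : R | 0 <= u <= 1 /\ V 0 u = s%:E].
have [w01 ws] : P (xget 0 P).
  by apply: xgetPex; exists u; split; [exact/andP | rewrite arclengthE ?us].
by exists (xget 0 P) => //; rewrite /arclength ws.
Qed.

Lemma dist_arclength_param s t : 0 <= s <= arclength 1 -> 0 <= t <= 1 ->
  d (arclength_param d g s) (g t) <= `|s - arclength t|.
Proof.
move=> s01 t01; have [w w01 [-> <-]] := arclength_paramP s01.
exact: dist_le_arclength_norm.
Qed.

End ArcLength.

Lemma powRV {R : realType} (r p : R) : 0 < r -> r^-1 `^ p = (r `^ p)^-1.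
Proof.
move=> r0; apply: (@mulIf _ (r `^ p)); first by rewrite gt_eqF // powR_gt0.
by rewrite -powRM ?invr_ge0 ?ltW // mulVf ?gt_eqF // powR1 mulVf // gt_eqF // powR_gt0.
Qed.

Section LowerIntegral.
Context {R : realType}.
Local Open Scope ereal_scope.

(* [F] need not be measurable: the integral of a nonnegative function is the
   supremum over the simple functions below it, here c 1_[a,b]. *)
Lemma integral_ge_on_itv (D : set R) (F : R -> \bar R) (a b c : R) :
  (a <= b)%R -> (0 <= c)%R -> `[a, b] `<=` D ->
  (forall x, D x -> 0 <= F x) -> (forall x, (a <= x <= b)%R -> c%:E <= F x) ->
  (c * (b - a))%:E <= \int[lebesgue_measure]_(x in D) F x.
Proof.
move=> + c0 abD F0 Fc; rewrite le_eqVlt => /predU1P[<-|ab].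
  by rewrite subrr mulr0 integral_ge0.
pose I : set (measurableTypeR R) := `[a, b]%classic.
have mI : measurable I by exact: measurable_itv.
pose h : {nnsfun measurableTypeR R >-> R} := scale_nnsfun (indic_nnsfun R mI) c0.
have -> : (c * (b - a))%:E = sintegral (@lebesgue_measure R) h.
  rewrite sintegralrM (_ : sintegral _ _ = lebesgue_measure I).
    by rewrite lebesgue_measure_itv /= lte_fin ab EFinM EFinB.
  exact: sintegral_indic.
rewrite ge0_integralE //; apply: ereal_sup_ubound; exists h => // x.
rewrite (_ : h x = c * \1_(`[a, b] : set R) x)%R // indicE /patch.
have [xab|xab] := boolP (x \in (`[a, b]%classic : set R)).
  have xD : x \in D by rewrite inE; apply: abD; rewrite inE in xab.
  by rewrite xD mulr1 Fc //; move: xab; rewrite inE /= in_itv.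
by rewrite mulr0; case: ifPn => // /[1!inE] /F0.
Qed.

End LowerIntegral.

Section LineIntegral.
Context {R : realType} {X : Type} (d : X -> X -> R) (g : R -> X).
Hypotheses (dm : is_metric d) (g_rect : rectifiable d g).
Hypothesis g_cont : curve_continuous d g.

Lemma line_integral_ball_indicator_ge1 (N : set X) (r t0 : R) :
  0 < r -> r <= arclength d g 1 -> 0 <= t0 <= 1 ->
  (forall x, d x (g t0) <= r -> N x) ->
  (1 <= line_integral d g (fun x => (r^-1 * \1_N x)%:E))%E.
Proof.
move=> r0 rL t01 ballN; have /andP[t0_ge0 t0_le1] := t01.
set L := arclength d g 1 in rL *; set s0 := arclength d g t0.
have s00 : 0 <= s0 by exact: arclength_ge0.
have s0L : s0 <= L by exact: arclength_le.
have [lo [lo0 loL near_s0]] : exists lo, [/\ 0 <= lo, lo + r <= L &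
    forall s, lo <= s <= lo + r -> `|s - s0| <= r].
  have [s0_le|s0_gt] := leP s0 (L - r); [exists s0 | exists (L - r)];
    by split=> [||s /andP[? ?]]; rewrite ?ler_norml; try (apply/andP; split); lra.
have := @integral_ge_on_itv _ [set s | 0 <= s <= L]
  (fun s => (r^-1 * \1_N (arclength_param d g s))%:E) lo (lo + r) r^-1.
rewrite addrAC subrr add0r mulVf ?gt_eqF //; apply.
- by rewrite lerDl ltW.
- by rewrite invr_ge0 ltW.
- by move=> s; rewrite /= in_itv /= => /andP[? ?]; apply/andP; split; lra.
- by move=> s _; rewrite lee_fin mulr_ge0 ?indicE ?ler0n // invr_ge0 ltW.
move=> s s_lo; rewrite indicE mem_set ?mulr1 //; apply: ballN.
have s0L' : 0 <= s <= L by move: s_lo => /andP[? ?]; apply/andP; split; lra.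
exact: le_trans (dist_arclength_param dm g_rect g_cont s0L' t01) (near_s0 s s_lo).
Qed.

End LineIntegral.

Section Liminf.
Context {R : realType}.
Local Open Scope ereal_scope.
Implicit Types (u : (\bar R)^nat) (f : R -> \bar R).

Lemma limn_einf_le u c : (forall n, u n <= c) -> limn_einf u <= c.
Proof.
move=> uc; rewrite limn_einf_lim; apply: lime_le; first exact: is_cvg_einfs.
by apply: nearW => n; apply: le_trans (uc n); apply: ereal_inf_lbound; exists n => /=.
Qed.

Lemma limn_einf_ge u c N : (forall n, (N <= n)%N -> c <= u n) -> c <= limn_einf u.
Proof.
move=> cu; rewrite limn_einf_lim; apply: lime_ge; first exact: is_cvg_einfs.
exists N => // n /= Nn; apply: le_ereal_inf_tmp => _ [k /= nk <-].
by apply: cu; exact: leq_trans Nn nk.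
Qed.

Lemma liminf0_ge0 f : (forall r, 0 <= f r) -> 0 <= liminf0 f.
Proof.
move=> f0; apply: (@le_trans _ _ (ereal_inf [set f r | r in [set r | (0 < r < 1)%R]])).
  by apply: le_ereal_inf_tmp => _ [r _ <-].
by apply: ereal_sup_ubound; exists 1%R => //=.
Qed.

Lemma liminf0_lt f c del : liminf0 f < c -> (0 < del)%R ->
  exists r, (0 < r < del)%R /\ f r < c.
Proof.
move=> fc del0; have : ereal_inf [set f r | r in [set r | (0 < r < del)%R]] < c.
  by apply: le_lt_trans fc; apply: ereal_sup_ubound; exists del.
by move=> /ereal_inf_lt[_ [r r_del <-] fr]; exists r.
Qed.

End Liminf.

Section MinkowskiBound.
Context {R : realType} {dX : measure_display} {X : measurableType dX}.
Variables (d : X -> X -> R) (mu : {measure set X -> \bar R}) (p : R) (A : set X).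

Lemma minkowski_content_ge0 : (0 <= minkowski_content d mu p A)%E.
Proof. by apply: liminf0_ge0 => r; rewrite mule_ge0 // lee_fin invr_ge0 powR_ge0. Qed.

Hypotheses (dm : is_metric d) (borel : (@measurable _ X) = <<s dopen d>>).

Lemma cl_nbhd_ball a x r : A a -> d x a <= r -> cl_nbhd d A r x.
Proof.
move=> Aa xa; apply: le_trans (_ : _ <= (d x a)%:E)%E _; last by rewrite lee_fin.
by apply: ereal_inf_lbound; exists a.
Qed.

Lemma dopen_setC_cl_nbhd r : dopen d (~` cl_nbhd d A r).
Proof.
move=> z /negP; rewrite -ltNge => rz.
have [q rq qz] : exists2 q, r < q & (q%:E <= dist_set d A z)%E.
  move: rz; case: (dist_set d A z) => [D | | ] rz.
  - by exists D; rewrite -?lte_fin.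
  - by exists (r + 1); [rewrite ltrDl | rewrite leey].
  - by move: rz; rewrite ltNge leNye.
exists (q - r); first by rewrite subr_gt0.
move=> y zy /= yN; have : ((q - d z y)%:E <= dist_set d A y)%E.
  apply: le_ereal_inf_tmp => _ [a Aa <-].
  have : (q%:E <= (d z a)%:E)%E.
    by apply: le_trans qz _; apply: ereal_inf_lbound; exists a.
  by rewrite !lee_fin => qa; have := is_metric_triangle dm z y a; lra.
by move=> /le_trans/(_ yN); rewrite lee_fin; lra.
Qed.

Lemma measurable_cl_nbhd r : measurable (cl_nbhd d A r).
Proof.
rewrite -[cl_nbhd _ _ _]setCK; apply: measurableC; rewrite borel.
by apply: sub_gen_smallest; exact: dopen_setC_cl_nbhd.
Qed.

Definition nbhd_weight r : X -> \bar R :=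
  fun x => (r^-1 * \1_(cl_nbhd d A r) x)%:E.

Lemma AM_admissible_nbhd_weight (rr : nat -> R) :
  (forall j, 0 < rr j < j.+1%:R^-1) -> AM_admissible d A (fun j => nbhd_weight (rr j)).
Proof.
move=> rr_small; split; [|split].
- move=> j; apply/measurable_EFinP/measurable_funM => //.
  exact/measurable_indic/measurable_cl_nbhd.
- move=> j x; have /andP[rr0 _] := rr_small j.
  by rewrite lee_fin mulr_ge0 ?indicE ?ler0n // invr_ge0 ltW.
move=> g [g_cont g_rect [s [t [s01 [t01 gst]]]] [t0 [t01' At0]]].
have L0 := arclength1_gt0 dm g_rect s01 t01 gst.
have [N NL] : exists N : nat, (arclength d g 1)^-1 < N%:R.
  by exists (Num.trunc (arclength d g 1)^-1).+1; exact: truncnS_gt.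
apply: (limn_einf_ge (N := N)) => j Nj; have /andP[rr0 rr_lt] := rr_small j.
apply: (line_integral_ball_indicator_ge1 dm g_rect g_cont rr0 _ t01'); last first.
  by move=> x; exact: cl_nbhd_ball At0.
apply/ltW/(lt_trans rr_lt); rewrite -(invrK (arclength d g 1)).
rewrite ltf_pV2 ?posrE ?invr_gt0 ?ltr0n //.
by apply: lt_le_trans NL _; rewrite ler_nat; lia.
Qed.

Hypotheses (mA : measurable A) (muA : mu A = 0%E).

Lemma integral_nbhd_weight r : p != 0 -> 0 < r ->
  (\int[mu]_x poweR (nbhd_weight r x) p =
   mu (cl_nbhd d A r `\` A) * ((r `^ p)^-1)%:E)%E.
Proof.
move=> p0 r0.
have -> : (fun x => poweR (nbhd_weight r x) p) =
          fun x => ((r^-1 `^ p) * \1_(cl_nbhd d A r) x)%:E.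
  apply: funext => x; rewrite poweR_EFin indicE.
  by case: (x \in _); rewrite ?mulr1 ?mulr0 ?powR0.
rewrite (integralZl_indic _ (fun _ => cl_nbhd d A r)) //;
  [|by rewrite ltNge powR_ge0|exact: measurable_cl_nbhd].
rewrite integral_indic //; last exact: measurable_cl_nbhd.
rewrite setIT powRV // muleC; congr (_ * _)%E.
have A_sub : A `<=` cl_nbhd d A r.
  by move=> a Aa; apply: cl_nbhd_ball Aa _; rewrite is_metric_xx // ltW.
rewrite -{1}(setDUK A_sub) setUC measureU0 //.
exact: measurableD (measurable_cl_nbhd r) mA.
Qed.

Lemma AM_le_gt_minkowski_content c : p != 0 ->
  (minkowski_content d mu p A < c)%E -> (AM d mu p A <= c)%E.
Proof.
move=> p0 Mc; have small_radius j : exists r, 0 < r < j.+1%:R^-1 /\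
    (mu (cl_nbhd d A r `\` A) * ((r `^ p)^-1)%:E < c)%E.
  by apply: liminf0_lt Mc _; rewrite invr_gt0 ltr0n.
have [rr rr_spec] := choice small_radius.
have AM_le : (AM d mu p A <=
    limn_einf (fun j => \int[mu]_x poweR (nbhd_weight (rr j) x) p))%E.
  apply: ereal_inf_lbound; exists (fun j => nbhd_weight (rr j)) => //.
  by apply: AM_admissible_nbhd_weight => j; case: (rr_spec j).
apply: le_trans AM_le _; apply: limn_einf_le => j.
by have [/andP[rr0 _] /ltW] := rr_spec j; rewrite integral_nbhd_weight.
Qed.

End MinkowskiBound.

Unset Implicit Arguments.

Theorem lemma3p16 (R : realType) (dX : measure_display) (X : measurableType dX)
  (d : X -> X -> R) (mu : {measure set X -> \bar R}) (p : R) (A : set X) :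
  is_metric d -> metric_complete d -> metric_separable d ->
  (@measurable _ X) = <<s dopen d>> ->
  (forall (x : X) (r : R), (mu [set y | (d x y < r)%R] < +oo)%E) ->
  1 <= p ->
  measurable A -> mu A = 0%E ->
  (AM d mu p A <= minkowski_content d mu p A)%E.
Proof.
move=> dm _ _ borel _ p1 mA muA.
have p0 : p != 0 by rewrite gt_eqF // (lt_le_trans ltr01 p1).
have [->|M_fin] := eqVneq (minkowski_content d mu p A) +oo%E; first by rewrite leey.
apply/lee_addgt0Pr => e e0; apply: AM_le_gt_minkowski_content => //.
by rewrite lteDl ?lte_fin // ge0_fin_numE ?ltey // minkowski_content_ge0.
Qed.
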